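(* For all $\lambda\in\mathbf{k}$ and $v\in\mathcal{V}^{\mathrm{DR}}$, one has in $\mathcal{V}^{\mathrm{DR}}\otimes\mathcal{V}^{\mathrm{DR}}$: \[\Delta^{\mathcal{W},\mathrm{DR}}(\lambda+ve_1)=\lambda(1\otimes1)+\mathsf{r}\mathrm{row}\cdot\mathsf{r}\rho(v)\cdot\mathsf{r}\mathrm{col},\] i.e. $\Delta^{\mathcal{W},\mathrm{DR}}$ followed by $\mathcal{W}^{\mathrm{DR}}\otimes\mathcal{W}^{\mathrm{DR}}\hookrightarrow\mathcal{V}^{\mathrm{DR}}\otimes\mathcal{V}^{\mathrm{DR}}$ equals $\Delta_{\mathcal{O}^{\mathrm{DR}}_{\mathsf{mat}}}$ composed with the isomorphism $\mathcal{W}^{\mathrm{DR}}\cong\mathbf{k}\oplus(\mathcal{V}^{\mathrm{DR}},\cdot_{e_1})$.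
   Context: $\mathbf{k}$ is a commutative $\mathbb{Q}$-algebra. $\mathfrak{f}_2$ is the free Lie algebra on $e_0,e_1$, $\mathcal{V}^{\mathrm{DR}}=U(\mathfrak{f}_2)$, $e_\infty=-e_0-e_1$; $\mathcal{V}^{\mathrm{DR}}\otimes\mathcal{V}^{\mathrm{DR}}=U(\mathfrak{f}_2\oplus\mathfrak{f}_2)$ with $e_i=e_i\otimes1$, $f_i=1\otimes e_i$. $\mathrm{S}_{\mathfrak{g}}$ is the antiautomorphism of $U(\mathfrak{g})$ with $x\mapsto-x$ on $\mathfrak{g}$. $\rho:\mathcal{V}^{\mathrm{DR}}\to M_3(\mathcal{V}^{\mathrm{DR}}\otimes\mathcal{V}^{\mathrm{DR}})$ is the algebra morphism with $\rho(e_0)=\begin{pmatrix}e_0&0&0\\0&-e_1+f_0&-e_1\\0&-e_\infty-f_0&-e_\infty\end{pmatrix}$, $\rho(e_1)=\begin{pmatrix}e_1&-f_1&0\\-e_1&f_1&0\\0&0&0\end{pmatrix}$, and $\mathsf{r}\rho=M_3(\mathrm{S}_{\mathfrak{f}_2\oplus\mathfrak{f}_2})\circ{}^t(-)\circ\rho\circ\mathrm{S}_{\mathfrak{f}_2}$ (entrywise, transpose). $\mathsf{r}\mathrm{row}=(1,-1,0)$, $\mathsf{r}\mathrm{col}={}^t(e_1,-f_1,0)$. For an algebra $B$ and $e\in B$, $\mathbf{k}\oplus(B,\cdot_e)$ has product $(\lambda,b)(\lambda',b')=(\lambda\lambda',\lambda b'+\lambda'b+beb')$; $\Delta_{\mathcal{O}^{\mathrm{DR}}_{\mathsf{mat}}}(\lambda,v)=\lambda+\mathsf{r}\mathrm{row}\,\mathsf{r}\rho(v)\,\mathsf{r}\mathrm{col}$.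 $\mathcal{W}^{\mathrm{DR}}=\mathbf{k}\oplus\mathcal{V}^{\mathrm{DR}}e_1$ is a subalgebra, isomorphic to $\mathbf{k}\oplus(\mathcal{V}^{\mathrm{DR}},\cdot_{e_1})$ via $(\lambda,v)\mapsto\lambda+ve_1$, and freely generated by $e_0^ne_1$, $n\ge0$. $\Delta^{\mathcal{W},\mathrm{DR}}:\mathcal{W}^{\mathrm{DR}}\to\mathcal{W}^{\mathrm{DR}}\otimes\mathcal{W}^{\mathrm{DR}}$ is the algebra morphism with $\Delta^{\mathcal{W},\mathrm{DR}}(e_0^ne_1)=e_0^ne_1\otimes1+1\otimes e_0^ne_1-\sum_{k=0}^{n-1}e_0^ke_1\otimes e_0^{n-k-1}e_1$. *)

From HB Require Import structures.
From mathcomp Require Import all_boot all_order all_algebra.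
Set Implicit Arguments. Unset Strict Implicit. Unset Printing Implicit Defensive.
Import GRing.Theory.
Local Open Scope ring_scope.

(* Words in the letters e0 (= false) and e1 (= true).  Elements of
   V^DR = U(f_2) = k<e0,e1> are represented by their coefficient functions
   word -> k (polynomials are those with finite support; see the theorem).
   Elements of V^DR (x) V^DR = U(f_2 + f_2) = k<e0,e1> (x) k<f0,f1> are
   represented by coefficient functions word -> word -> k : the coefficient
   of e_a f_b (= e_a (x) e_b) at (a, b). *)
Definition word := seq bool.

Section Defs.
Variable k : comRingType.

Definition ser := word -> k.
Definition ser2 := word -> word -> k.

Definition addV (x y : ser) : ser := fun w => x w + y w.
Definition mulV (x y : ser) : ser :=
  fun w => \sum_(i < (size w).+1) x (take i w) * y (drop i w).
Definition constV (l : k) : ser := fun w => if w == [::] then l else 0.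
Definition eV (b : bool) : ser := fun w => (w == [:: b])%:R.
(* antipode S_{f_2}: antiautomorphism with x |-> -x on f_2 *)
Definition SV (x : ser) : ser := fun w => (-1) ^+ size w * x (rev w).

Definition zero2 : ser2 := fun _ _ => 0.
Definition add2 (A B : ser2) : ser2 := fun a b => A a b + B a b.
Definition opp2 (A : ser2) : ser2 := fun a b => - A a b.
Definition scal2 (l : k) (A : ser2) : ser2 := fun a b => l * A a b.
Definition bas2 (u v : word) : ser2 := fun a b => ((a == u) && (b == v))%:R.
Definition one2 : ser2 := bas2 [::] [::].
Definition mul2 (A B : ser2) : ser2 :=
  fun a b => \sum_(i < (size a).+1) \sum_(j < (size b).+1)
               A (take i a) (take j b) * B (drop i a) (drop j b).
(* e_b = e_b (x) 1 and f_b = 1 (x) e_b *)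
Definition e2 (b : bool) : ser2 := bas2 [:: b] [::].
Definition f2 (b : bool) : ser2 := bas2 [::] [:: b].
Definition einf2 : ser2 := opp2 (add2 (e2 false) (e2 true)).
(* antipode S_{f_2 + f_2}: antiautomorphism with x |-> -x on f_2 + f_2;
   since the two factors commute, S(e_a f_b) = (-1)^(|a|+|b|) e_(rev a) f_(rev b) *)
Definition S2 (A : ser2) : ser2 :=
  fun a b => (-1) ^+ (size a + size b) * A (rev a) (rev b).

Definition M3 := 'I_3 -> 'I_3 -> ser2.
Definition M3of (l : seq (seq ser2)) : M3 :=
  fun i j => nth zero2 (nth [::] l i) j.
Definition mulM3 (A B : M3) : M3 :=
  fun i j => \big[add2/zero2]_(l < 3) mul2 (A i l) (B l j).
Definition idM3 : M3 := fun i j => if i == j then one2 else zero2.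
Definition scalM3 (l : k) (A : M3) : M3 := fun i j => scal2 l (A i j).
Definition addM3 (A B : M3) : M3 := fun i j => add2 (A i j) (B i j).
Definition zeroM3 : M3 := fun _ _ => zero2.

Definition rho_e0 : M3 := M3of
  [:: [:: e2 false; zero2; zero2];
      [:: zero2; add2 (opp2 (e2 true)) (f2 false); opp2 (e2 true)];
      [:: zero2; add2 (opp2 einf2) (opp2 (f2 false)); opp2 einf2]].
Definition rho_e1 : M3 := M3of
  [:: [:: e2 true; opp2 (f2 true); zero2];
      [:: opp2 (e2 true); f2 true; zero2];
      [:: zero2; zero2; zero2]].
Definition rho_letter (b : bool) : M3 := if b then rho_e1 else rho_e0.
Definition rho_word (w : word) : M3 := foldr (fun b M => mulM3 (rho_letter b) M) idM3 w.
(* rho on a polynomial x whose support is contained in the duplicate-free list s *)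
Definition rho (s : seq word) (x : ser) : M3 :=
  \big[addM3/zeroM3]_(w <- s) scalM3 (x w) (rho_word w).
(* r rho = M_3(S_{f2+f2}) o transpose o rho o S_{f2}; the support of S x is rev @ s *)
Definition rrho (s : seq word) (x : ser) : M3 :=
  fun i j => S2 (rho [seq rev w | w <- s] (SV x) j i).

Definition rrow (i : 'I_3) : ser2 :=
  nth zero2 [:: one2; opp2 one2; zero2] i.
Definition rcol (j : 'I_3) : ser2 :=
  nth zero2 [:: e2 true; opp2 (f2 true); zero2] j.
Definition row_mat_col (M : M3) : ser2 :=
  \big[add2/zero2]_(i < 3) \big[add2/zero2]_(j < 3) mul2 (mul2 (rrow i) (M i j)) (rcol j).

Definition Delta_Omat (s : seq word) (l : k) (v : ser) : ser2 :=
  add2 (scal2 l one2) (row_mat_col (rrho s v)).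

(* ---- W^DR and Delta^{W,DR} ----
   W^DR = k + V^DR e1 is freely generated by y_n = e0^n e1; every word that is
   empty or ends in e1 factors uniquely as a product of the y_n. *)
Definition yword (n : nat) : word := rcons (nseq n false) true.
Definition DeltaY (n : nat) : ser2 :=
  add2 (add2 (bas2 (yword n) [::]) (bas2 [::] (yword n)))
       (opp2 (\big[add2/zero2]_(i < n) bas2 (yword i) (yword (n - i.+1)))).
(* the algebra morphism Delta^W on the word e0^n w (w the rest), following the
   unique factorisation into generators y_m; words not in W get junk value 0 *)
Fixpoint DW_aux (n : nat) (w : word) : ser2 :=
  match w with
  | [::] => if n is 0 then one2 else zero2
  | false :: w' => DW_aux n.+1 w'
  | true :: w' => mul2 (DeltaY n) (DW_aux 0 w')
  end.
Definition DW (w : word) : ser2 := DW_aux 0 w.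
Definition DeltaW (s : seq word) (x : ser) : ser2 :=
  \big[add2/zero2]_(w <- s) scal2 (x w) (DW w).

End Defs.

From HB Require Import structures.
From mathcomp Require Import all_boot all_order all_algebra.
From mathcomp Require Import boolp.
From mathcomp Require Import ring zify.

(* The
   antipode is an antiautomorphism acting by -1 on the entries of rho(e0) and
   rho(e1), so "transpose, then antipode" reverses products of matrices; hence
   the matrix of rrho on a word w is the product of the transposes rho(b)^T over
   the letters b of w, the signs cancelling those of S_{f_2}.  The point is that
   rho(e1)^T = rcol . rrow has rank one: in rrow . rrho(w) . rcol the product
   therefore splits at every letter e1 of w e1 into factors
   rrow . (rho(e0)^T)^n . rcol, and a direct computation of the row vector
   rrow . (rho(e0)^T)^n shows that this factor is Delta(e0^n e1).  Both sides of
   the identity are thus multiplicative along the factorisation of w e1 into the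
   generators e0^n e1. *)

Set Implicit Arguments. Unset Strict Implicit. Unset Printing Implicit Defensive.
Import GRing.Theory.
Local Open Scope ring_scope.

Section DoubleSums.
Variables (R : pzSemiRingType) (I J : Type) (r : seq I) (t : seq J).
Variables (F : I -> J -> R) (c : R).

Lemma mulr_sum2l :
  (\sum_(i <- r) \sum_(j <- t) F i j) * c = \sum_(i <- r) \sum_(j <- t) F i j * c.
Proof. by rewrite mulr_suml; apply: eq_bigr => i _; apply: mulr_suml. Qed.

Lemma mulr_sum2r :
  c * (\sum_(i <- r) \sum_(j <- t) F i j) = \sum_(i <- r) \sum_(j <- t) c * F i j.
Proof. by rewrite mulr_sumr; apply: eq_bigr => i _; apply: mulr_sumr. Qed.

End DoubleSums.

Lemma big_prodN (R : pzRingType) (I : Type) (r : seq I) (F : I -> R) :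
  \prod_(i <- r) - F i = (-1) ^+ size r * \prod_(i <- r) F i.
Proof.
elim: r => [|x r IH]; first by rewrite !big_nil mul1r.
by rewrite !big_cons IH /= exprS mulN1r !mulNr !mulrA (commr_sign (F x)).
Qed.

Lemma signM_mxE (R : pzRingType) n m (M : 'M[R]_n.+1) i j :
  ((-1) ^+ m * M) i j = (-1) ^+ m * M i j.
Proof.
by rewrite -(signr_odd _ m) -(signr_odd R m) !mulr_sign; case: odd; rewrite ?mxE.
Qed.

Lemma scale_signM (R : pzRingType) (A : lalgType R) n (c : R) (x : A) :
  ((-1) ^+ n * c) *: ((-1) ^+ n * x) = c *: x.
Proof.
rewrite -(signr_odd R n) -(signr_odd A n) !mulr_sign.
by case: odd; rewrite ?scaleNr ?scalerN ?opprK.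
Qed.

Section Deconcatenation.
Variable T : eqType.
Implicit Types a u v : seq T.

Fixpoint splits_rec a : seq (seq T * seq T) :=
  if a is x :: a' then ([::], a) :: [seq (x :: p.1, p.2) | p <- splits_rec a']
  else [:: ([::], [::])].
Fact splits_key : unit. Proof. by []. Qed.
Definition splits := locked_with splits_key splits_rec.
Canonical splits_unlockable := [unlockable fun splits].

Lemma splits_nil : splits [::] = [:: ([::], [::])].
Proof. by rewrite unlock. Qed.

Lemma splits_cons x a :
  splits (x :: a) = ([::], x :: a) :: [seq (x :: p.1, p.2) | p <- splits a].
Proof. by rewrite unlock. Qed.

Lemma big_splits (V : nmodType) a (F : seq T -> seq T -> V) :
  \sum_(i < (size a).+1) F (take i a) (drop i a) = \sum_(p <- splits a) F p.1 p.2.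
Proof.
elim: a F => [|x a IH] F; first by rewrite splits_nil big_ord1 big_seq1.
by rewrite splits_cons big_ord_recl big_cons big_map -(IH (fun u => F (x :: u))).
Qed.

Lemma splits_assoc (V : nmodType) a (G : seq T -> seq T -> seq T -> V) :
  \sum_(p <- splits a) \sum_(q <- splits p.1) G q.1 q.2 p.2 =
  \sum_(p <- splits a) \sum_(q <- splits p.2) G p.1 q.1 q.2.
Proof.
elim: a G => [|x a IH] G; first by rewrite splits_nil !big_seq1 splits_nil !big_seq1.
rewrite splits_cons !big_cons big_map splits_nil big_seq1.
under eq_bigr => p _ do rewrite splits_cons big_cons big_map.
by rewrite big_split /= (IH (fun u v w => G (x :: u) v w)) splits_cons big_cons
  !big_map addrA.
Qed.

Variable R : pzSemiRingType.

Lemma sum_splits_nil_l a (F : seq T -> seq T -> R) :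
  \sum_(p <- splits a) (p.1 == [::])%:R * F p.1 p.2 = F [::] a.
Proof.
case: a => [|x a]; first by rewrite splits_nil big_seq1 mul1r.
rewrite splits_cons big_cons big_map mul1r big1 ?addr0 // => p _.
by rewrite mul0r.
Qed.

Lemma sum_splits_nil_r a (F : seq T -> seq T -> R) :
  \sum_(p <- splits a) (p.2 == [::])%:R * F p.1 p.2 = F a [::].
Proof.
elim: a F => [|x a IH] F; first by rewrite splits_nil big_seq1 mul1r.
by rewrite splits_cons big_cons big_map /= mul0r add0r (IH (fun u v => F (x :: u) v)).
Qed.

Lemma sum_splits_eq a u v :
  \sum_(p <- splits a) (p.1 == u)%:R * (p.2 == v)%:R = (a == u ++ v)%:R :> R.
Proof.
elim: a u => [|x a IH] [|y u] /=.
- by rewrite splits_nil big_seq1 /= -natrM; case: v.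
- by rewrite splits_nil big_seq1 mul0r.
- rewrite splits_cons big_cons big_map /= mul1r big1 ?addr0 // => p _.
  by rewrite mul0r.
rewrite splits_cons big_cons big_map /= mul0r add0r.
under eq_bigr => p _ do rewrite eqseq_cons -mulnb natrM -mulrA.
by rewrite -mulr_sumr IH eqseq_cons -mulnb natrM.
Qed.

End Deconcatenation.

Section BiwordAlgebra.
Variable k : comNzRingType.
Local Notation R := (ser2 k).
Implicit Types A B C : R.

HB.instance Definition _ := Choice.copy R (word -> word -> k).

Lemma ser2P A B : (forall a b, A a b = B a b) -> A = B.
Proof. by move=> eqAB; apply/funext=> a; apply/funext=> b; apply: eqAB. Qed.

Lemma add2A : associative (@add2 k).
Proof. by move=> A B C; apply: ser2P => a b; apply: addrA. Qed.
Lemma add2C : commutative (@add2 k).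
Proof. by move=> A B; apply: ser2P => a b; apply: addrC. Qed.
Lemma add02 : left_id (zero2 k) (@add2 k).
Proof. by move=> A; apply: ser2P => a b; apply: add0r. Qed.
Lemma addN2 : left_inverse (zero2 k) (@opp2 k) (@add2 k).
Proof. by move=> A; apply: ser2P => a b; apply: addNr. Qed.

HB.instance Definition _ := GRing.isZmodule.Build R add2A add2C add02 addN2.

Lemma mul2E A B a b :
  mul2 A B a b = \sum_(p <- splits a) \sum_(q <- splits b) A p.1 q.1 * B p.2 q.2.
Proof.
rewrite /mul2 (big_splits a (fun u v =>
  \sum_(j < (size b).+1) A u (take j b) * B v (drop j b))).
apply: eq_bigr => p _.
exact: (big_splits _ (fun u v => A p.1 u * B p.2 v)).
Qed.

Lemma mul2A : associative (@mul2 k).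
Proof.
move=> A B C; apply: ser2P => a b; rewrite !mul2E.
transitivity (\sum_(p <- splits a) \sum_(p' <- splits p.2) \sum_(q <- splits b)
   \sum_(q' <- splits q.2) A p.1 q.1 * (B p'.1 q'.1 * C p'.2 q'.2)).
  under eq_bigr => p _ do under eq_bigr => q _ do rewrite mul2E mulr_sum2r.
  by apply: eq_bigr => p _; rewrite exchange_big.
symmetry.
under eq_bigr => p _ do under eq_bigr => q _ do rewrite mul2E mulr_sum2l.
under eq_bigr => p _ do rewrite exchange_big.
rewrite (splits_assoc a (fun u1 u2 w => \sum_(q <- splits b) \sum_(q' <- splits q.1)
   A u1 q'.1 * B u2 q'.2 * C w q.2)).
apply: eq_bigr => p _; apply: eq_bigr => p' _.
rewrite (splits_assoc b (fun u1 u2 w => A p.1 u1 * B p'.1 u2 * C p'.2 w)).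
by apply: eq_bigr => q _; apply: eq_bigr => q' _; rewrite mulrA.
Qed.

Lemma mul12 : left_id (one2 k) (@mul2 k).
Proof.
move=> A; apply: ser2P => a b; rewrite mul2E.
transitivity (\sum_(p <- splits a) (p.1 == [::])%:R *
   \sum_(q <- splits b) (q.1 == [::])%:R * A p.2 q.2).
  apply: eq_bigr => p _; rewrite mulr_sumr; apply: eq_bigr => q _.
  by rewrite /one2 /bas2 -mulnb natrM mulrA.
rewrite (sum_splits_nil_l a
  (fun _ u => \sum_(q <- splits b) (q.1 == [::])%:R * A u q.2)).
exact: (sum_splits_nil_l b (fun _ => A a)).
Qed.

Lemma mul21 : right_id (one2 k) (@mul2 k).
Proof.
move=> A; apply: ser2P => a b; rewrite mul2E.
transitivity (\sum_(p <- splits a) (p.2 == [::])%:R *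
   \sum_(q <- splits b) (q.2 == [::])%:R * A p.1 q.1).
  apply: eq_bigr => p _; rewrite mulr_sumr; apply: eq_bigr => q _.
  by rewrite /one2 /bas2 -mulnb natrM mulrC -mulrA.
rewrite (sum_splits_nil_r a
  (fun u (_ : word) => \sum_(q <- splits b) (q.2 == [::])%:R * A u q.1)).
exact: (sum_splits_nil_r b (fun u _ => A a u)).
Qed.

Lemma mul2Dl : left_distributive (@mul2 k) (@add2 k).
Proof.
move=> A B C; apply: ser2P => a b; rewrite /add2 !mul2E -big_split.
by apply: eq_bigr => p _; rewrite -big_split; apply: eq_bigr => q _; rewrite mulrDl.
Qed.

Lemma mul2Dr : right_distributive (@mul2 k) (@add2 k).
Proof.
move=> A B C; apply: ser2P => a b; rewrite /add2 !mul2E -big_split.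
by apply: eq_bigr => p _; rewrite -big_split; apply: eq_bigr => q _; rewrite mulrDr.
Qed.

HB.instance Definition _ :=
  GRing.Zmodule_isPzRing.Build R mul2A mul12 mul21 mul2Dl mul2Dr.

Lemma one2_neq0 : (1 : R) != 0.
Proof. by apply/eqP => /(congr1 (fun A : R => A [::] [::]))/eqP; rewrite oner_eq0. Qed.

HB.instance Definition _ := GRing.PzSemiRing_isNonZero.Build R one2_neq0.

Lemma ser2DE A B a b : (A + B) a b = A a b + B a b.
Proof. by []. Qed.

Lemma ser2NE A a b : (- A) a b = - A a b.
Proof. by []. Qed.

Lemma ser21E a b : (1 : R) a b = ((a == [::]) && (b == [::]))%:R.
Proof. by []. Qed.

Lemma scal2A (c d : k) A : scal2 c (scal2 d A) = scal2 (c * d) A.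
Proof. by apply: ser2P => a b; apply: mulrA. Qed.
Lemma scal21 : left_id 1 (@scal2 k).
Proof. by move=> A; apply: ser2P => a b; apply: mul1r. Qed.
Lemma scal2Dr (c : k) : {morph scal2 c : A B / A + B}.
Proof. by move=> A B; apply: ser2P => a b; apply: mulrDr. Qed.
Lemma scal2Dl A : {morph (@scal2 k)^~ A : c d / c + d}.
Proof. by move=> c d; apply: ser2P => a b; apply: mulrDl. Qed.

HB.instance Definition _ :=
  GRing.Zmodule_isLmodule.Build k R scal2A scal21 scal2Dr scal2Dl.

Lemma ser2ZE (c : k) A a b : (c *: A) a b = c * A a b.
Proof. by []. Qed.

Lemma scal2Al (c : k) A B : scal2 c (mul2 A B) = mul2 (scal2 c A) B.
Proof.
apply: ser2P => a b; rewrite /scal2 !mul2E mulr_sum2r.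
by apply: eq_bigr => p _; apply: eq_bigr => q _; rewrite mulrA.
Qed.

HB.instance Definition _ := GRing.Lmodule_isLalgebra.Build k R scal2Al.

Lemma scal2Ar (c : k) A B : scal2 c (mul2 A B) = mul2 A (scal2 c B).
Proof.
apply: ser2P => a b; rewrite /scal2 !mul2E mulr_sum2r.
by apply: eq_bigr => p _; apply: eq_bigr => q _; rewrite mulrCA.
Qed.

HB.instance Definition _ := GRing.Lalgebra_isAlgebra.Build k R scal2Ar.

Lemma bas2M u v u' v' : bas2 k u v * bas2 k u' v' = bas2 k (u ++ u') (v ++ v').
Proof.
apply: ser2P => a b; rewrite -[_ * _]/(mul2 _ _) mul2E /bas2.
transitivity ((\sum_(p <- splits a) (p.1 == u)%:R * (p.2 == u')%:R) *
   (\sum_(q <- splits b) (q.1 == v)%:R * (q.2 == v')%:R) : k).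
  rewrite mulr_suml; apply: eq_bigr => p _; rewrite mulr_sumr; apply: eq_bigr => q _.
  rewrite -!mulnb !natrM; ring.
by rewrite !sum_splits_eq -natrM mulnb.
Qed.

End BiwordAlgebra.

Section Antipode.
Variable k : comNzRingType.
Local Notation R := (ser2 k).
Implicit Types A B : R.

Lemma S2B : zmod_morphism (@S2 k).
Proof. by move=> A B; apply: ser2P => a b; apply: mulrBr. Qed.
HB.instance Definition _ := GRing.isZmodMorphism.Build R R (@S2 k) S2B.

Lemma S2Z : scalable (@S2 k).
Proof. by move=> c A; apply: ser2P => a b; apply: mulrCA. Qed.
HB.instance Definition _ := GRing.isScalable.Build k R R *:%R (@S2 k) S2Z.

Lemma S2M A B : S2 (A * B) = S2 B * S2 A.
Proof.
apply: ser2P => a b; rewrite -![_ * _]/(mul2 _ _) /S2 /mul2 !size_rev mulr_sumr.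
rewrite (reindex_inj rev_ord_inj); apply: eq_bigr => i _.
rewrite mulr_sumr (reindex_inj rev_ord_inj); apply: eq_bigr => j _.
have ia : (i <= size a)%N by rewrite -ltnS.
have jb : (j <= size b)%N by rewrite -ltnS.
rewrite /= !subSS !take_rev !drop_rev !subKn // !size_takel // !size_drop.
have -> : (size a + size b = (i + j) + ((size a - i) + (size b - j)))%N by lia.
by rewrite exprD; ring.
Qed.

Lemma S21 : S2 (1 : R) = 1.
Proof.
apply: ser2P => a b; rewrite /S2 !ser21E -!nilpE !rev_nilp.
by case: a => [|x a]; case: b => [|y b]; rewrite /= ?mulr0 // expr0 mul1r.
Qed.

Lemma S2_bas2 u v :
  S2 (bas2 k u v) = (-1) ^+ (size u + size v) *: bas2 k (rev u) (rev v).
Proof.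
apply: ser2P => a b; rewrite ser2ZE /S2 /bas2.
rewrite -[u in rev a == u]revK -[v in rev b == v]revK !(can_eq (@revK _)).
have [-> | _] := eqVneq a (rev u); last by rewrite !mulr0.
by have [-> | _] := eqVneq b (rev v); rewrite ?mulr0 // !size_rev.
Qed.

Lemma S2_e2 b : S2 (e2 k b) = - e2 k b.
Proof. by rewrite /e2 S2_bas2 expr1 scaleN1r. Qed.

Lemma S2_f2 b : S2 (f2 k b) = - f2 k b.
Proof. by rewrite /f2 S2_bas2 expr1 scaleN1r. Qed.

Lemma S2_rho_letter b i j : S2 (rho_letter k b i j) = - rho_letter k b i j.
Proof.
have S2D A B : S2 A = - A -> S2 B = - B -> S2 (add2 A B) = - add2 A B.
  by move=> SA SB; rewrite (raddfD (@S2 k) A B) /= SA SB -opprD.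
have S2N A : S2 A = - A -> S2 (opp2 A) = - opp2 A.
  by move=> SA; rewrite (raddfN (@S2 k) A) /= SA.
have S20 : S2 (zero2 k) = - zero2 k by rewrite (raddf0 (@S2 k)) oppr0.
case: b; case: i => [[|[|[|?]]] ?]; case: j => [[|[|[|?]]] ?] //=;
  rewrite /rho_e0 /rho_e1 /M3of /einf2 /=;
  repeat first [apply: (S2D) | apply: (S2N) | apply: (S20) | apply: S2_e2 | apply: S2_f2].
Qed.

End Antipode.

Section AntipodeTranspose.
Variables (k : comNzRingType) (n : nat).
Local Notation R := (ser2 k).

Definition trS (M : 'M[R]_n.+1) : 'M[R]_n.+1 := \matrix_(i, j) S2 (M j i).

Lemma trSM (A B : 'M[R]_n.+1) : trS (A * B) = trS B * trS A.
Proof.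
apply/matrixP => i j; rewrite !mxE raddf_sum; apply: eq_bigr => l _.
by rewrite /= S2M !mxE.
Qed.

Lemma trS1 : trS 1 = 1.
Proof.
apply/matrixP => i j; rewrite !mxE eq_sym.
by case: eqP => _; rewrite ?S21 ?raddf0.
Qed.

Lemma trS_prod (I : Type) (r : seq I) (F : I -> 'M[R]_n.+1) :
  trS (\prod_(i <- r) F i) = \prod_(i <- rev r) trS (F i).
Proof.
elim: r => [|x r IH]; first by rewrite !big_nil trS1.
by rewrite big_cons trSM IH rev_cons big_rcons.
Qed.

End AntipodeTranspose.

Section RhoMatrices.
Variable k : comNzRingType.
Local Notation R := (ser2 k).

Definition M3mx (M : M3 k) : 'M[R]_3 := \matrix_(i, j) M i j.

Lemma M3mx_mulM3 A B : M3mx (mulM3 A B) = M3mx A * M3mx B.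
Proof. by apply/matrixP => i j; rewrite !mxE; apply: eq_bigr => l _; rewrite !mxE. Qed.

Lemma M3mx_idM3 : M3mx (idM3 k) = 1.
Proof. by apply/matrixP => i j; rewrite !mxE /idM3; case: eqP. Qed.

Lemma M3mx_rho_word w : M3mx (rho_word k w) = \prod_(b <- w) M3mx (rho_letter k b).
Proof.
elim: w => [|b w IH]; first by rewrite big_nil M3mx_idM3.
by rewrite big_cons -IH -M3mx_mulM3.
Qed.

Definition rhoT_letter b : 'M[R]_3 := (M3mx (rho_letter k b))^T.
Definition rhoT_word (w : word) : 'M[R]_3 := \prod_(b <- w) rhoT_letter b.

Lemma trS_rho_letter b : trS (M3mx (rho_letter k b)) = - rhoT_letter b.
Proof. by apply/matrixP => i j; rewrite !mxE S2_rho_letter. Qed.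

Lemma trS_rho_word_rev w :
  trS (M3mx (rho_word k (rev w))) = (-1) ^+ size w * rhoT_word w.
Proof.
rewrite M3mx_rho_word trS_prod revK.
by under eq_bigr do rewrite trS_rho_letter; rewrite big_prodN.
Qed.

Definition rowv : 'rV[R]_3 := \row_i rrow k i.
Definition colv : 'cV[R]_3 := \col_j rcol k j.

Lemma row_mat_colE M : row_mat_col M = (rowv *m M3mx M *m colv) 0 0.
Proof.
rewrite !mxE; under [RHS]eq_bigr do rewrite !mxE mulr_suml.
rewrite exchange_big; apply: eq_bigr => i _; apply: eq_bigr => j _.
by rewrite !mxE.
Qed.

Lemma rhoT_letter_e1 : rhoT_letter true = colv *m rowv.
Proof.
apply/matrixP => i j; rewrite !mxE big_ord1 !mxE.
case: i => [[|[|[|?]]] ?] //; case: j => [[|[|[|?]]] ?] //=.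
all: rewrite /rho_e1 /M3of /rcol /rrow /= ?(mulr1, mulrN1, mulr0, mul0r, opprK) //.
by rewrite (oppr0 (ser2 k)).
Qed.

Definition row3 (x y z : R) : 'rV[R]_3 := \row_j [:: x; y; z]`_j.

Definition xn n : R := bas2 k (nseq n false) [::].
Definition yn n : R :=
  \sum_(i < n) bas2 k (yword i) (nseq (n - i.+1) false) - bas2 k [::] (nseq n false).

Lemma xnS n : xn n.+1 = xn n * e2 k false.
Proof. by rewrite /xn /e2 bas2M -addn1 nseqD. Qed.

Lemma ynS n : yn n.+1 = yn n * f2 k false + xn n * e2 k true.
Proof.
have nseqSr m : nseq m false ++ [:: false] = nseq m.+1 false by rewrite -addn1 nseqD.
rewrite /yn /xn /f2 /e2 big_ord_recr subnn mulrBl mulr_suml !bas2M /= nseqSr cats1.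
under [in RHS]eq_bigr => i _ do rewrite bas2M cats0 nseqSr -(subSn (ltn_ord i)).
by rewrite addrAC.
Qed.

Lemma rowv_rhoT_e0_exp n :
  rowv *m rhoT_letter false ^+ n = row3 (xn n) (yn n) (- xn n - yn n).
Proof.
elim: n => [|n IH].
  rewrite expr0 mulmx1; apply/matrixP => i j; rewrite !mxE.
  by case: j => [[|[|[|?]]] ?] //=; rewrite /yn big_ord0 sub0r ?opprK ?addNr.
rewrite exprSr mulmxA IH; apply/matrixP => i j.
rewrite !mxE !big_ord_recl big_ord0 !mxE /rho_e0 /M3of.
case: j => [[|[|[|?]]] ?] //=; rewrite !mulr0 add0r !addr0 /rho_e0 /M3of /einf2 /=.
- by rewrite xnS.
- rewrite ynS; move: (xn n) (yn n) (e2 k true) (f2 k false) => x y e1 f0.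
  rewrite !(mulrDr, mulrDl, mulrN, mulNr, opprK).
  by apply: ser2P => a b; rewrite !(ser2DE, ser2NE); ring.
- rewrite xnS ynS.
  move: (xn n) (yn n) (e2 k false) (e2 k true) (f2 k false) => x y e0 e1 f0.
  rewrite !(mulrDr, mulrDl, mulrN, mulNr, opprK).
  by apply: ser2P => a b; rewrite !(ser2DE, ser2NE); ring.
Qed.

Lemma DeltaY_rowv n : DeltaY k n = (rowv *m rhoT_letter false ^+ n *m colv) 0 0.
Proof.
rewrite rowv_rhoT_e0_exp !mxE !big_ord_recl big_ord0 !mxE /rcol /=.
rewrite mulr0 !addr0 mulrN /xn /yn mulrBl mulr_suml /e2 /f2 !bas2M cats0 !cats1.
under eq_bigr do rewrite bas2M cats0 cats1.
by rewrite opprB addrA.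
Qed.

Lemma DW_aux_rcons n w :
  DW_aux k n (rcons w true) =
  (rowv *m rhoT_letter false ^+ n *m rhoT_word w *m colv) 0 0.
Proof.
elim: w n => [|[] w IH] n /=.
- by rewrite /rhoT_word big_nil mulmx1 -DeltaY_rowv; apply: mulr1.
- rewrite -[mul2 _ _]/(_ * _ : R) IH expr0 mulmx1 DeltaY_rowv /rhoT_word big_cons.
  have split_e1 A P : rowv *m A *m (colv *m rowv * P) *m colv =
      (rowv *m A *m colv) *m (rowv *m P *m colv) by rewrite -mulmxE !mulmxA.
  by rewrite rhoT_letter_e1 split_e1 [RHS]mxE big_ord1.
- by rewrite IH exprSr /rhoT_word big_cons -!mulmxE !mulmxA.
Qed.

End RhoMatrices.

Section Series.
Variable k : comNzRingType.

Lemma rhoE s x i j : rho s x i j = \sum_(w <- s) x w *: rho_word k w i j.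
Proof.
elim: s => [|w s IH]; first by rewrite /rho !big_nil.
by rewrite big_cons -IH [in LHS]/rho big_cons.
Qed.

Lemma rrhoE s (v : ser k) i j :
  rrho s v i j = \sum_(w <- s) v w *: rhoT_word k w i j.
Proof.
rewrite /rrho rhoE big_map linear_sum; apply: eq_bigr => w _.
rewrite linearZ /=.
have -> : S2 (rho_word k (rev w) j i) = trS (M3mx (rho_word k (rev w))) i j.
  by rewrite !mxE.
by rewrite trS_rho_word_rev signM_mxE /SV size_rev revK scale_signM.
Qed.

Lemma row_mat_col_sum (I : Type) (r : seq I) (c : I -> k) (M : I -> M3 k) :
  row_mat_col (fun i j => \sum_(x <- r) c x *: M x i j) =
  \sum_(x <- r) c x *: row_mat_col (M x).
Proof.
have E N : row_mat_col N = \sum_(i < 3) \sum_(j < 3) rrow k i * N i j * rcol k j by [].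
rewrite !E; under eq_bigr => i _ do under eq_bigr => j _ do rewrite mulr_sumr mulr_suml.
under eq_bigr do rewrite exchange_big; rewrite exchange_big.
apply: eq_bigr => x _; rewrite E scaler_sumr; apply: eq_bigr => i _.
rewrite scaler_sumr; apply: eq_bigr => j _.
by rewrite -scalerAr -scalerAl.
Qed.

Lemma mulV_eV_nil (v : ser k) b : mulV v (eV k b) [::] = 0.
Proof. by rewrite /mulV big_ord1 /eV mulr0. Qed.

Lemma mulV_eV_rcons (v : ser k) b w : mulV v (eV k b) (rcons w b) = v w.
Proof.
rewrite /mulV size_rcons !big_ord_recr /= -cats1 drop_size_cat // take_size_cat //.
rewrite drop_oversize ?size_cat ?addn1 // /eV /= mulr0 addr0 eqxx mulr1.
rewrite big1 ?add0r // => i _.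
have /negPf-> : drop i (w ++ [:: b]) != [:: b].
  apply/eqP => /(congr1 size); rewrite size_drop size_cat /=.
  by have := ltn_ord i; lia.
by rewrite mulr0.
Qed.

Lemma constV_rcons (l : k) w b : constV l (rcons w b) = 0.
Proof. by case: w. Qed.

Lemma DeltaW_addV_mulV_e1 (l : k) (v : ser k) s :
  DeltaW ([::] :: [seq rcons w true | w <- s])
         (addV (constV l) (mulV v (eV k true))) =
  l *: 1 + \sum_(w <- s) v w *: DW k (rcons w true).
Proof.
rewrite /DeltaW big_cons big_map /addV mulV_eV_nil addr0.
by under eq_bigr do rewrite constV_rcons mulV_eV_rcons add0r.
Qed.

Lemma row_mat_col_rrho s (v : ser k) :
  row_mat_col (rrho s v) = \sum_(w <- s) v w *: DW k (rcons w true).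
Proof.
have -> : rrho s v = fun i j => \sum_(w <- s) v w *: rhoT_word k w i j.
  by apply/funext => i; apply/funext => j; apply: rrhoE.
rewrite row_mat_col_sum; apply: eq_bigr => w _.
rewrite row_mat_colE /DW DW_aux_rcons expr0 mulmx1; congr (_ *: (_ *m _ *m _) _ _).
by apply/matrixP => i j; rewrite mxE.
Qed.

End Series.

Theorem theorem3p18 (k : comAlgType rat) (l : k) (v : ser k) (s : seq word) :
  uniq s -> (forall w, w \notin s -> v w = 0) ->
  forall a b : word,
    DeltaW ([::] :: [seq rcons w true | w <- s])
           (addV (constV l) (mulV v (eV k true))) a b
    = Delta_Omat s l v a b.
Proof.
move=> _ _ a b; congr (_ a b).
by rewrite DeltaW_addV_mulV_e1 /Delta_Omat row_mat_col_rrho.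
Qed.
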